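(* Let $H$ be an $r$-graph. If $H$ contains a $2$-locally large subgraph, then $H$ is $2$-locally large.
   Context: An $r$-graph is an $r$-uniform hypergraph. Let $H$ be an $r$-graph on $m$ vertices and $\sigma:V(H)\to[m]$ a bijection. For $x\in V(H)$ and $1\le i\le r$, $T_x^i$ is the set of edges $e\ni x$ such that $\sigma(x)$ is the $i$-th smallest of the values $\sigma(v)$, $v\in e$. For $r+1\le i\le 2r+1$, $T_x^i$ is the set of edges $e\not\ni x$ such that $\sigma(x)$ is the $(i-r)$-th smallest among the values $\sigma(v)$, $v\in e\cup\{x\}$. $H$ is $2$-locally large if there exists a bijection $\sigma:V(H)\to[m]$ such that for every vertex $x\in V(H)$ some $T_x^i$, $i\in[2r+1]$, contains at least two edges. *)

From mathcomp Require Import all_boot.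
Set Implicit Arguments. Unset Strict Implicit. Unset Printing Implicit Defensive.

Definition is_rgraph (V : finType) (r : nat) (VH : {set V}) (E : {set {set V}}) : Prop :=
  forall e, e \in E -> e \subset VH /\ #|e| = r.

Definition is_subgraph (V : finType) (r : nat) (VH' : {set V}) (E' : {set {set V}})
  (VH : {set V}) (E : {set {set V}}) : Prop :=
  is_rgraph r VH' E' /\ VH' \subset VH /\ E' \subset E.

(* sigma : V(H) -> [m] is a bijection, m = |V(H)|, [m] = {1,...,m}. *)
Definition is_labelling (V : finType) (VH : {set V}) (sigma : V -> nat) : Prop :=
  {in VH &, injective sigma} /\ (forall x, x \in VH -> 1 <= sigma x <= #|VH|).

Definition below (V : finType) (sigma : V -> nat) (e : {set V}) (x : V) : nat :=
  #|[set v in e | sigma v < sigma x]|.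

(* T_x^i, 1 <= i <= 2r+1.  For i <= r: edges e containing x in which sigma x is
   the i-th smallest (i.e. exactly i-1 vertices of e are below x).
   For r+1 <= i <= 2r+1: edges e not containing x such that sigma x is the
   (i-r)-th smallest of e ∪ {x} (i.e. exactly i-r-1 vertices of e are below x). *)
Definition T (V : finType) (r : nat) (E : {set {set V}}) (sigma : V -> nat) (x : V) (i : nat)
  : {set {set V}} :=
  if i <= r then [set e in E | (x \in e) && (below sigma e x == i - 1)]
  else [set e in E | (x \notin e) && (below sigma e x == i - r - 1)].

Definition two_locally_large (V : finType) (r : nat) (VH : {set V}) (E : {set {set V}}) : Prop :=
  exists sigma : V -> nat, is_labelling VH sigma /\
    forall x, x \in VH -> exists i, 1 <= i <= 2 * r + 1 /\ 2 <= #|T r E sigma x i|.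

From mathcomp Require Import all_boot zify.

Set Implicit Arguments.
Unset Strict Implicit.
Unset Printing Implicit Defensive.

(* Keep the labelling of the 2-locally large subgraph H' on V(H') and give the
   remaining vertices of H the labels |V(H')| + 1, ..., |V(H)|.  Old vertices
   keep their large T-sets, because the labels of the vertices of H' are
   unchanged and H has more edges.  A new vertex x lies above every vertex of
   H', so every edge of H' misses x and has all its r vertices below x: the
   whole edge set of H', which has at least two edges, lies in T_x^(2r+1). *)

Section LocalSets.

Variable V : finType.
Implicit Types (VH : {set V}) (E : {set {set V}}) (sigma tau : V -> nat).

Lemma T_subset r E sigma x i : T r E sigma x i \subset E.
Proof.
by rewrite /T; case: ifP => _; apply/subsetP => e; rewrite inE => /andP[].
Qed.

Lemma subset_T r E' E sigma x i :
  E' \subset E -> T r E' sigma x i \subset T r E sigma x i.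
Proof.
move=> /subsetP sE'E; apply/subsetP => e.
by rewrite /T; case: ifP => _; rewrite !inE => /andP[/sE'E -> ->].
Qed.

Lemma eq_below_in sigma tau e x :
  {in x |: e, sigma =1 tau} -> below sigma e x = below tau e x.
Proof.
move=> eq_st; rewrite /below; apply: eq_card => v; rewrite !inE.
by case ve: (v \in e) => //=; rewrite !eq_st // !inE ?ve ?eqxx ?orbT.
Qed.

Lemma eq_T_in r VH E sigma tau x i :
  is_rgraph r VH E -> x \in VH -> {in VH, sigma =1 tau} ->
  T r E sigma x i = T r E tau x i.
Proof.
move=> HE xVH eq_st; apply/setP => e.
rewrite /T; case: ifP => _; rewrite !inE; apply: andb_id2l => eE;
  have [/subsetP eVH _] := HE e eE;
  by rewrite (@eq_below_in sigma tau) // => v /setU1P[-> | /eVH]; apply: eq_st.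
Qed.

Lemma T_top_label r VH E sigma x :
  is_rgraph r VH E -> {in VH, forall v, sigma v < sigma x} ->
  T r E sigma x (2 * r + 1) = E.
Proof.
move=> HE below_x; apply/setP => e.
rewrite /T ifF; last by lia.
rewrite inE; case eE: (e \in E) => //=.
have [/subsetP eVH card_e] := HE e eE.
apply/andP; split; first by apply/negP => /eVH /below_x; rewrite ltnn.
have -> : 2 * r + 1 - r - 1 = r by lia.
rewrite /below -card_e.
apply/eqP/eq_card => v; rewrite inE.
by case ve: (v \in e) => //=; apply: below_x; apply: eVH.
Qed.

Lemma two_locally_large_card_edges r VH E :
  VH != set0 -> two_locally_large r VH E -> 1 < #|E|.
Proof.
case/set0Pn => x xVH [sigma [_ large]]; have [i [_ T2]] := large x xVH.
exact: leq_trans T2 (subset_leq_card (T_subset _ _ _ _ _)).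
Qed.

End LocalSets.

Section ExtendLabelling.

Variables (V : finType) (VH' VH : {set V}) (sigma : V -> nat).
Hypotheses (sVH' : VH' \subset VH) (lab : is_labelling VH' sigma).

Definition extend_labelling (v : V) : nat :=
  if v \in VH' then sigma v else #|VH'| + (index v (enum (VH :\: VH'))).+1.

Lemma extend_labelling_old v : v \in VH' -> extend_labelling v = sigma v.
Proof. by rewrite /extend_labelling => ->. Qed.

Lemma extend_labelling_old_le v : v \in VH' -> extend_labelling v <= #|VH'|.
Proof.
by move=> vVH'; rewrite extend_labelling_old //; case/andP: (lab.2 v vVH').
Qed.

Lemma extend_labelling_new v :
  v \in VH :\: VH' -> #|VH'| < extend_labelling v <= #|VH|.
Proof.
move=> vD; move: (vD); rewrite inE => /andP[/negbTE vVH' _].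
have := cardsDS sVH'; have := subset_leq_card sVH'.
have : index v (enum (VH :\: VH')) < #|VH :\: VH'|.
  by rewrite cardE index_mem mem_enum.
rewrite /extend_labelling vVH'; lia.
Qed.

Lemma extend_labelling_above x :
  x \in VH :\: VH' ->
  {in VH', forall v, extend_labelling v < extend_labelling x}.
Proof.
move=> /extend_labelling_new /andP[x_gt _] v /extend_labelling_old_le v_le.
exact: leq_ltn_trans v_le x_gt.
Qed.

Lemma extend_labellingP : is_labelling VH extend_labelling.
Proof.
have new v : v \in VH -> v \notin VH' -> v \in VH :\: VH'.
  by move=> vVH vVH'; rewrite inE vVH vVH'.
split.
  move=> u v uVH vVH; case uVH': (u \in VH'); case vVH': (v \in VH').
  - by rewrite !extend_labelling_old //; apply: lab.1.
  - have := extend_labelling_old_le uVH'.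
    have := extend_labelling_new (new v vVH (negbT vVH')); lia.
  - have := extend_labelling_old_le vVH'.
    have := extend_labelling_new (new u uVH (negbT uVH')); lia.
  - rewrite /extend_labelling uVH' vVH' => /eqP; rewrite eqn_add2l eqSS => /eqP.
    by apply: (index_inj u); rewrite mem_enum new ?uVH' ?vVH'.
move=> v vVH; case vVH': (v \in VH').
  rewrite extend_labelling_old //.
  have := lab.2 v vVH'; have := subset_leq_card sVH'; lia.
have := extend_labelling_new (new v vVH (negbT vVH')); lia.
Qed.

End ExtendLabelling.

Theorem proposition2 (V : finType) (r : nat) (VH : {set V}) (E : {set {set V}}) :
  is_rgraph r VH E ->
  (exists (VH' : {set V}) (E' : {set {set V}}),
      is_subgraph r VH' E' VH E /\ VH' != set0 /\ two_locally_large r VH' E') ->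
  two_locally_large r VH E.
Proof.
move=> _ [VH' [E' [[HE' [sVH' sE']] [VH'_ne large']]]].
have E'_big := two_locally_large_card_edges VH'_ne large'.
have [sigma [lab large]] := large'.
pose tau := extend_labelling VH' VH sigma.
exists tau; split; first exact: extend_labellingP.
move=> x xVH; case xVH': (x \in VH').
- have [i [i_range T2]] := large x xVH'; exists i; split => //.
  have eq_st : {in VH', sigma =1 tau}.
    by move=> v vVH'; rewrite /tau extend_labelling_old.
  rewrite (eq_T_in _ HE' xVH' eq_st) in T2.
  exact: leq_trans T2 (subset_leq_card (subset_T _ _ _ _ sE')).
- have xD : x \in VH :\: VH' by rewrite inE xVH' xVH.
  exists (2 * r + 1); split; first by lia.
  rewrite -(T_top_label HE' (extend_labelling_above sVH' lab xD)) in E'_big.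
  exact: leq_trans E'_big (subset_leq_card (subset_T _ _ _ _ sE')).
Qed.
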